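(* Let $Q\in\mathbb{R}^{n\times n}$ be symmetric positive definite, $\|x\|=\sqrt{x^TQx}$, $\|u\|_*=\sqrt{u^TQ^{-1}u}$. Let $f\colon\mathbb{R}^n\to\mathbb{R}$ be convex and differentiable with $\|\nabla f(x)-\nabla f(y)\|_*\le L\|x-y\|$ for all $x,y$, with a minimizer $x_\star$, $f_\star=f(x_\star)$. Let $w$ be differentiable and $1$-strongly convex with respect to $\|\cdot\|$, $V_x(y)=w(y)-\langle\nabla w(x),y-x\rangle-w(x)$. Let $\{\alpha_k\}_{k\ge1}$ be positive with $\alpha_1=\frac2L$, and $\tau_k=\frac2{\alpha_{k+1}L}$ with $0<\tau_k\le1$ for $k=0,1,\dots$. Given $x_0$, let $z_0=x_0$, $x_{-1}=x_0$, and for $k\ge0$ \[ y_{k+1}=x_k-L^{-1}Q^{-1}\nabla f(x_k),\quad z_{k+1}=\operatorname*{argmin}_{y}\{V_{z_k}(y)+\langle\alpha_{k+1}\nabla f(x_k),y-x_k\rangle\},\quad x_{k+1}=(1-\tau_{k+1})y_{k+1}+\tau_{k+1}z_{k+1}. \] Let $h(x)=f(x)-f_\star-\frac1{2L}\|\nabla f(x)\|_*^2$. Then for $k=0,1,\dots$, \[ \frac{\alpha_{k+1}^2L}{2}h(x_k)+V_{z_{k+1}}(x_\star)\le\frac{\alpha_{k+1}^2L-2\alpha_{k+1}}{2}h(x_{k-1})+V_{z_k}(x_\star). \]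
   Context: $\langle\cdot,\cdot\rangle$ is the Euclidean inner product. ''$1$-strongly convex with respect to $\|\cdot\|$'' means $w(y)\ge w(x)+\langle\nabla w(x),y-x\rangle+\frac12\|y-x\|^2$ for all $x,y$. *)

From HB Require Import structures.
From mathcomp Require Import all_boot all_order all_algebra.
From mathcomp Require Import all_classical all_reals all_analysis.
Set Implicit Arguments. Unset Strict Implicit. Unset Printing Implicit Defensive.
Import Order.TTheory GRing.Theory Num.Theory.
Import numFieldNormedType.Exports.
Local Open Scope ring_scope.

Definition ip {R : realType} {n : nat} (u v : 'cV[R]_n) : R := (u^T *m v) 0 0.

Definition qf {R : realType} {n : nat} (A : 'M[R]_n) (u : 'cV[R]_n) : R :=
  (u^T *m A *m u) 0 0.

Definition spd {R : realType} {n : nat} (Q : 'M[R]_n) : Prop :=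
  Q^T = Q /\ forall x : 'cV[R]_n, x != 0 -> 0 < qf Q x.

Definition Qnorm {R : realType} {n : nat} (Q : 'M[R]_n) (x : 'cV[R]_n) : R :=
  Num.sqrt (qf Q x).
Definition Qdnorm {R : realType} {n : nat} (Q : 'M[R]_n) (u : 'cV[R]_n) : R :=
  Num.sqrt (qf (invmx Q) u).

Definition grad {R : realType} {n : nat} (f : 'cV[R]_n -> R) (x : 'cV[R]_n)
  : 'cV[R]_n := \col_i ('D_(delta_mx i 0) f x).

Definition convex_fun {R : realType} {n : nat} (f : 'cV[R]_n -> R) : Prop :=
  forall (x y : 'cV[R]_n) (t : R), 0 <= t <= 1 ->
    f ((1 - t) *: x + t *: y) <= (1 - t) * f x + t * f y.

Definition strongly_convex1 {R : realType} {n : nat} (Q : 'M[R]_n)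
  (w : 'cV[R]_n -> R) : Prop :=
  forall x y : 'cV[R]_n,
    w x + ip (grad w x) (y - x) + 2^-1 * (Qnorm Q (y - x)) ^+ 2 <= w y.

Definition Vbreg {R : realType} {n : nat} (w : 'cV[R]_n -> R) (x y : 'cV[R]_n)
  : R := w y - ip (grad w x) (y - x) - w x.

From HB Require Import structures.
From mathcomp Require Import all_boot all_order all_algebra.
From mathcomp Require Import all_classical all_reals all_analysis.
From mathcomp Require Import ring lra.
Set Implicit Arguments. Unset Strict Implicit. Unset Printing Implicit Defensive.
Import Order.TTheory GRing.Theory Num.Theory.
Import numFieldNormedType.Exports.
Local Open Scope ring_scope.
Local Open Scope classical_set_scope.

(* Write a = alpha_{k+1} and g = grad f(x_k).  Optimality of the mirror step,
   strong convexity of w and Young's inequality give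
     V_{z_{k+1}}(xstar) <= V_{z_k}(xstar) + a <g, xstar - z_k> + a^2/2 ||g||_*^2.
   Split xstar - z_k = (xstar - x_k) + (x_k - z_k).  Cocoercivity of grad f
   between x_k and the minimiser, where the gradient vanishes, bounds the first
   term; the coupling x_k = (1 - tau) y_k + tau z_k turns the second into
   (a^2 L - 2a)/2 <g, y_k - x_k>, which cocoercivity between x_{k-1} and x_k
   bounds by the decrease of h (for k = 0 the coefficient vanishes because
   alpha_1 = 2/L).  Since a + (a^2 L - 2a)/2 = a^2 L/2, the squared-gradient
   terms cancel exactly.  Cocoercivity follows from convexity and the descent
   lemma, and the descent lemma from the mean value theorem. *)

Section DirectionalDerivative.
Variables (R : realType) (V : normedModType R) (F : V -> R) (p d : V).
Hypothesis dF : derivable F p d.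

Lemma derivable_cvg_at_right :
  t^-1 * (F (t *: d + p) - F p) @[t --> 0^'+] --> 'D_d F p.
Proof.
apply: cvg_trans (cvg_app _ _) dF.
by apply: within_subset => t /= t0; exact: lt0r_neq0.
Qed.

Lemma derive_le_incr C :
  (forall t : R, 0 < t <= 1 -> F (t *: d + p) - F p <= t * C) -> 'D_d F p <= C.
Proof.
move=> incrC; apply: cvgr_to_le derivable_cvg_at_right _.
near=> t.
have /andP[t0 t1] : 0 < t <= 1.
  by apply/andP; split; near: t; [exact: nbhs_right_gt | exact/nbhs_right_le/ltr01].
by rewrite ler_pdivrMl // incrC ?t0.
Unshelve. all: by end_near.
Qed.

Lemma derive_ge_incr C :
  (forall t : R, 0 < t <= 1 -> t * C <= F (t *: d + p) - F p) -> C <= 'D_d F p.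
Proof.
move=> incrC; apply: cvgr_to_ge derivable_cvg_at_right _.
near=> t.
have /andP[t0 t1] : 0 < t <= 1.
  by apply/andP; split; near: t; [exact: nbhs_right_gt | exact/nbhs_right_le/ltr01].
by rewrite ler_pdivlMl // incrC ?t0.
Unshelve. all: by end_near.
Qed.
End DirectionalDerivative.

Lemma convex_comb_subr (F : fieldType) (V : lmodType F) (t : F) (y z : V) : t != 0 ->
  (1 - t) *: y + t *: z - z = (1 - t) / t *: (y - ((1 - t) *: y + t *: z)).
Proof.
move=> t0.
have -> : y - ((1 - t) *: y + t *: z) = t *: (y - z).
  by rewrite opprD addrA -{1}[y]scale1r -scalerBl subKr scalerBr.
rewrite scalerA mulfVK // scalerBr -addrA -{2}[z]scale1r -scalerBl.
by rewrite -scaleNr opprB.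
Qed.

Section InnerProduct.
Variables (R : realType) (n : nat).
Implicit Types (u v w : 'cV[R]_n) (A : 'M[R]_n).

Lemma ipE u v : ip u v = \sum_i u i 0 * v i 0.
Proof. by rewrite /ip mxE; apply: eq_bigr => i _; rewrite mxE. Qed.

Lemma ipC u v : ip u v = ip v u.
Proof. by rewrite !ipE; apply: eq_bigr => i _; rewrite mulrC. Qed.

Lemma ipDr u v w : ip u (v + w) = ip u v + ip u w.
Proof. by rewrite /ip mulmxDr mxE. Qed.

Lemma ipZr a u v : ip u (a *: v) = a * ip u v.
Proof. by rewrite /ip -scalemxAr mxE. Qed.

Lemma ipNr u v : ip u (- v) = - ip u v.
Proof. by rewrite /ip mulmxN mxE. Qed.

Lemma ipBr u v w : ip u (v - w) = ip u v - ip u w.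
Proof. by rewrite ipDr ipNr. Qed.

Lemma ip0r u : ip u 0 = 0.
Proof. by rewrite /ip mulmx0 mxE. Qed.

Lemma ipZl a u v : ip (a *: v) u = a * ip v u.
Proof. by rewrite ipC ipZr ipC. Qed.

Lemma ipBl u v w : ip (v - w) u = ip v u - ip w u.
Proof. by rewrite ipC ipBr ![ip u _]ipC. Qed.

Lemma ip_delta u i : ip u (delta_mx i 0) = u i 0.
Proof.
rewrite ipE (bigD1 i) //= big1 => [|j ji]; first by rewrite !mxE !eqxx mulr1 addr0.
by rewrite !mxE (negPf ji) mulr0.
Qed.

Lemma ip_mulmxr A u v : ip u (A *m v) = ip (A^T *m u) v.
Proof. by rewrite /ip trmx_mul trmxK mulmxA. Qed.

Lemma qfE A u : qf A u = ip u (A *m u).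
Proof. by rewrite /qf /ip mulmxA. Qed.

Lemma qfZ A a u : qf A (a *: u) = a ^+ 2 * qf A u.
Proof. by rewrite !qfE -scalemxAr ipZl ipZr mulrA expr2. Qed.

Lemma qfN A u : qf A (- u) = qf A u.
Proof. by rewrite -scaleN1r qfZ sqrrN expr1n mul1r. Qed.

Lemma qfB A u v : A^T = A -> qf A (u - v) = qf A u - 2 * ip u (A *m v) + qf A v.
Proof.
move=> symA; rewrite !qfE mulmxBr ipBl !ipBr.
have -> : ip v (A *m u) = ip u (A *m v) by rewrite ip_mulmxr symA ipC.
by ring.
Qed.

End InnerProduct.

Section Gradient.
Variables (R : realType) (n : nat) (f : 'cV[R]_n -> R).
Implicit Types (p q d : 'cV[R]_n).

Lemma derive_grad p d : differentiable f p -> 'D_d f p = ip (grad f p) d.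
Proof.
move=> df; rewrite deriveE // ipE {1}(matrix_sum_delta d) linear_sum /=.
apply: eq_bigr => i _; rewrite big_ord1 linearZ /= mxE -deriveE //.
by rewrite mulrC (ord1 (0 : 'I_1)).
Qed.

Lemma is_derive_line p d t : differentiable f (p + t *: d) ->
  is_derive t (1 : R) (fun s : R => f (p + s *: d)) (ip (grad f (p + t *: d)) d).
Proof.
move=> df.
have quotE : (fun h : R => h^-1 *: ((fun s => f (p + s *: d)) (h *: 1 + t)
      - f (p + t *: d))) = (fun h : R => h^-1 *: (f (h *: d + (p + t *: d)) - f (p + t *: d))).
  by apply: funext => h; rewrite scaler1 scalerDl addrCA addrA.
apply: DeriveDef; first by rewrite /derivable /= quotE; exact: diff_derivable.
by rewrite /derive /= quotE -/(derive _ _ _) derive_grad.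
Qed.

Lemma convex_fun_grad p q : convex_fun f -> differentiable f p ->
  f p + ip (grad f p) (q - p) <= f q.
Proof.
move=> cvx df; rewrite -derive_grad // addrC -lerBrDr.
apply: derive_le_incr; first exact: diff_derivable.
move=> t /andP[t0 t1]; have := cvx p q t; rewrite ltW //= t1.
have -> : (1 - t) *: p + t *: q = t *: (q - p) + p.
  by apply/matrixP => i j; rewrite !mxE; ring.
by move=> /(_ isT); lra.
Qed.

Lemma grad_min_eq0 p : (forall q, f p <= f q) -> differentiable f p -> grad f p = 0.
Proof.
move=> fmin df.
have ip_ge0 d : 0 <= ip (grad f p) d.
  rewrite -derive_grad //; apply: derive_ge_incr; first exact: diff_derivable.
  by move=> t _; rewrite mulr0 subr_ge0.
apply/matrixP => i j; rewrite (ord1 j) [RHS]mxE -ip_delta; apply/eqP.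
by rewrite eq_le ip_ge0 andbT -oppr_ge0 -ipNr ip_ge0.
Qed.

End Gradient.

Section PositiveDefinite.
Variables (R : realType) (n : nat) (Q : 'M[R]_n).
Hypothesis Qspd : spd Q.
Implicit Types (u v : 'cV[R]_n).

Lemma spd_qf_ge0 u : 0 <= qf Q u.
Proof.
have [->|u0] := eqVneq u 0; first by rewrite qfE mulmx0 ip0r.
exact/ltW/Qspd.2.
Qed.

Lemma spd_unitmx : Q \in unitmx.
Proof.
rewrite -row_free_unit; apply: inj_row_free => v vQ0.
have Qv0 : Q *m v^T = 0 by rewrite -{1}Qspd.1 -trmx_mul vQ0 trmx0.
apply: trmx_inj; rewrite trmx0; apply/eqP; apply: contraT => v0.
by have := Qspd.2 _ v0; rewrite /qf -mulmxA Qv0 mulmx0 mxE ltxx.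
Qed.

Lemma spd_trmx_inv : (invmx Q)^T = invmx Q.
Proof. by rewrite trmx_inv Qspd.1. Qed.

Lemma spd_mulmxVK u : Q *m (invmx Q *m u) = u.
Proof. by rewrite mulmxA mulmxV ?spd_unitmx // mul1mx. Qed.

Lemma spd_qf_inv u : qf Q (invmx Q *m u) = qf (invmx Q) u.
Proof. by rewrite !qfE spd_mulmxVK ipC. Qed.

Lemma spd_qf_inv_ge0 u : 0 <= qf (invmx Q) u.
Proof. by rewrite -spd_qf_inv spd_qf_ge0. Qed.

Lemma Qdnorm_sqr u : Qdnorm Q u ^+ 2 = qf (invmx Q) u.
Proof. by rewrite sqr_sqrtr // spd_qf_inv_ge0. Qed.

Lemma Qnorm_sqr u : Qnorm Q u ^+ 2 = qf Q u.
Proof. by rewrite sqr_sqrtr // spd_qf_ge0. Qed.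

Lemma young_ip s u v : 2 * s * ip u v <= s ^+ 2 * qf (invmx Q) u + qf Q v.
Proof.
have := spd_qf_ge0 (s *: (invmx Q *m u) - v).
by rewrite qfB ?Qspd.1 // qfZ spd_qf_inv ipZl ip_mulmxr Qspd.1 spd_mulmxVK; lra.
Qed.

End PositiveDefinite.

Section SmoothConvex.
Variables (R : realType) (n : nat) (Q : 'M[R]_n) (f : 'cV[R]_n -> R) (L : R).
Hypotheses (Qspd : spd Q) (df : forall p, differentiable f p) (L_gt0 : 0 < L).
Hypothesis grad_Lipschitz :
  forall p q, Qdnorm Q (grad f p - grad f q) <= L * Qnorm Q (p - q).
Implicit Types (p q d : 'cV[R]_n).

Lemma grad_Lipschitz_sqr p q :
  qf (invmx Q) (grad f p - grad f q) <= L ^+ 2 * qf Q (p - q).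
Proof.
rewrite -Qdnorm_sqr // -Qnorm_sqr // -exprMn ler_pXn2r ?nnegrE ?sqrtr_ge0 //.
by rewrite mulr_ge0 ?sqrtr_ge0 ?ltW.
Qed.

Lemma ip_grad_incr_le p d t : 0 < t ->
  ip (grad f (p + t *: d) - grad f p) d <= L * t * qf Q d.
Proof.
move=> t_gt0; have Lt_gt0 : 0 < L * t by rewrite mulr_gt0.
have young := young_ip Qspd (L * t)^-1 (grad f (p + t *: d) - grad f p) d.
have := grad_Lipschitz_sqr (p + t *: d) p.
rewrite [p + _ - _]addrC addKr qfZ => lip.
set X := ip _ d in young *; set A := qf _ _ in young lip; set B := qf Q d in young lip *.
have sA_le : (L * t)^-1 ^+ 2 * A <= B.
  by rewrite exprVn ler_pdivrMl ?exprn_gt0 // exprMn -mulrA.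
have sX_le : (L * t)^-1 * X <= B by lra.
by rewrite ler_pdivrMl in sX_le.
Qed.

Lemma descent_le p d : f (p + d) <= f p + ip (grad f p) d + L / 2 * qf Q d.
Proof.
set K := ip (grad f p) d; set B := qf Q d.
pose G := (fun s : R => f (p + s *: d)) - (K \*: id + (L / 2 * B) \*: (id * id)).
have dG t : is_derive t (1 : R) G
    (ip (grad f (p + t *: d)) d - (K *: 1 + (L / 2 * B) *: (t *: 1 + t *: 1))).
  by apply: is_deriveB; apply: is_derive_line.
have cG : {within `[0, 1], continuous G}.
  by apply: derivable_within_continuous => t _; exact: (dG t).(ex_derive).
have [c /[!in_itv] /= /andP[c_gt0 _]] := MVT ltr01 (fun t _ => dG t) cG.
have slopeE : K%:A + (L / 2 * B) *: (c%:A + c%:A) = K + L * B * c :> R.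
  by rewrite /GRing.scale /= !mulr1; field.
have GE s : G s = f (p + s *: d) - (K * s + L / 2 * B * (s * s)) by [].
rewrite slopeE subr0 mulr1 -/G !GE !mulr0 !mulr1 scale0r add0r subr0 addr0.
have := ip_grad_incr_le p d c_gt0.
rewrite ipBl -/K -/B scale1r; lra.
Qed.

Hypothesis f_convex : convex_fun f.

Lemma cocoercive_le p q :
  f p + ip (grad f p) (q - p) + (2 * L)^-1 * qf (invmx Q) (grad f q - grad f p) <= f q.
Proof.
set D := grad f q - grad f p; set d := - L^-1 *: (invmx Q *m D).
have cvx := convex_fun_grad (q + d) f_convex (df p).
have desc := descent_le q d.
have DE : qf (invmx Q) D = ip (grad f q) (invmx Q *m D) - ip (grad f p) (invmx Q *m D).
  by rewrite qfE ipBl.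
rewrite addrAC ipDr in cvx.
rewrite /d qfZ spd_qf_inv // !ipZr DE in cvx desc *.
have LE : L / 2 * (- L^-1) ^+ 2 = (2 * L)^-1 by field; exact: lt0r_neq0.
rewrite mulrA LE in desc.
have invL : L^-1 = 2 * (2 * L)^-1 by field; exact: lt0r_neq0.
rewrite invL in cvx desc; lra.
Qed.

Lemma ip_grad_step_le p q :
  ip (grad f q) (p - L^-1 *: (invmx Q *m grad f p) - q)
  <= f p - f q - (2 * L)^-1 * (qf (invmx Q) (grad f p) + qf (invmx Q) (grad f q)).
Proof.
have := cocoercive_le q p; rewrite qfB ?spd_trmx_inv // => coco.
rewrite addrAC ipBr ipZr ip_mulmxr spd_trmx_inv // [ip (invmx Q *m _) _]ipC.
have invL : L^-1 = 2 * (2 * L)^-1 by field; exact: lt0r_neq0.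
rewrite invL; lra.
Qed.

Lemma momentum_le a xp x y z : 0 < a -> 0 < 2 / (a * L) <= 1 ->
  y = xp - L^-1 *: (invmx Q *m grad f xp) ->
  x = (1 - 2 / (a * L)) *: y + 2 / (a * L) *: z ->
  a * ip (grad f x) (x - z) <= (a ^+ 2 * L - 2 * a) / 2
    * (f xp - f x - (2 * L)^-1 * (qf (invmx Q) (grad f xp) + qf (invmx Q) (grad f x))).
Proof.
set tau := 2 / (a * L) => a_gt0 /andP[tau_gt0 tau_le1] yE xE.
have xz := convex_comb_subr y z (lt0r_neq0 tau_gt0); rewrite -xE in xz.
have -> : (a ^+ 2 * L - 2 * a) / 2 = a * ((1 - tau) / tau).
  by rewrite /tau; field; rewrite !lt0r_neq0.
rewrite xz ipZr mulrA ler_wpM2l ?yE ?ip_grad_step_le //.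
by rewrite mulr_ge0 ?divr_ge0 ?subr_ge0 ?mulr_ge0 ?(ltW a_gt0) ?(ltW L_gt0).
Qed.

End SmoothConvex.

Section MirrorStep.
Variables (R : realType) (n : nat) (Q : 'M[R]_n) (w : 'cV[R]_n -> R).
Implicit Types (z p c u : 'cV[R]_n).

Lemma Vbreg_ge_qf z p : spd Q -> strongly_convex1 Q w -> qf Q (z - p) / 2 <= Vbreg w z p.
Proof.
move=> Qspd w_sc; have := w_sc z p.
by rewrite /Vbreg -[z - p]opprB qfN -Qnorm_sqr //; lra.
Qed.

Lemma Vbreg_three_point z z' p :
  Vbreg w z' p = Vbreg w z p - Vbreg w z z' + ip (grad w z - grad w z') (p - z').
Proof.
rewrite /Vbreg; have -> : p - z = (p - z') + (z' - z) by rewrite addrA subrK.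
by rewrite (ipDr _ (p - z')) ipBl; ring.
Qed.

Lemma mirror_step_le z z' u c p : differentiable w z' ->
  (forall y, Vbreg w z z' + ip u (z' - c) <= Vbreg w z y + ip u (y - c)) ->
  Vbreg w z' p <= Vbreg w z p - Vbreg w z z' + ip u (p - z').
Proof.
move=> dw z'_min; rewrite (Vbreg_three_point z) lerD2l ipBl lerBlDr -lerBlDl.
rewrite -(derive_grad _ dw); apply: derive_ge_incr; first exact: diff_derivable.
move=> t _; have := z'_min (t *: (p - z') + z').
rewrite /Vbreg -[_ + z' - c]addrA -[_ + z' - z]addrA !(ipDr _ (t *: _)) !ipZr.
lra.
Qed.

Lemma mirror_step_bound z z' a g c p : spd Q -> strongly_convex1 Q w ->
  differentiable w z' ->
  (forall y, Vbreg w z z' + ip (a *: g) (z' - c) <= Vbreg w z y + ip (a *: g) (y - c)) ->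
  Vbreg w z' p <= Vbreg w z p + a * ip g (p - z) + a ^+ 2 / 2 * qf (invmx Q) g.
Proof.
move=> Qspd w_sc dw z'_min; have := mirror_step_le p dw z'_min.
have -> : p - z' = (p - z) + (z - z') by rewrite addrA subrK.
rewrite (ipDr _ (p - z)) !ipZl.
have := Vbreg_ge_qf z z' Qspd w_sc; have := young_ip Qspd a g (z - z'); lra.
Qed.

End MirrorStep.

Theorem lemma2 (R : realType) (n : nat) (Q : 'M[R]_n)
  (f w : 'cV[R]_n -> R) (L : R) (xstar : 'cV[R]_n)
  (alpha : nat -> R) (x y z : nat -> 'cV[R]_n) :
  spd Q ->
  convex_fun f ->
  (forall p, differentiable f p) ->
  0 < L ->
  (forall p q, Qdnorm Q (grad f p - grad f q) <= L * Qnorm Q (p - q)) ->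
  (forall p, f xstar <= f p) ->
  (forall p, differentiable w p) ->
  strongly_convex1 Q w ->
  (forall k, (1 <= k)%N -> 0 < alpha k) ->
  alpha 1%N = 2 / L ->
  (forall k, 0 < 2 / (alpha k.+1 * L) <= 1) ->
  z 0%N = x 0%N ->
  (forall k, y k.+1 = x k - L^-1 *: (invmx Q *m grad f (x k))) ->
  (forall k, forall p,
     Vbreg w (z k) (z k.+1) + ip (alpha k.+1 *: grad f (x k)) (z k.+1 - x k)
     <= Vbreg w (z k) p + ip (alpha k.+1 *: grad f (x k)) (p - x k)) ->
  (forall k, let tau := 2 / (alpha k.+2 * L) in
     x k.+1 = (1 - tau) *: y k.+1 + tau *: z k.+1) ->
  let h := fun p => f p - f xstar - (2 * L)^-1 * (Qdnorm Q (grad f p)) ^+ 2 in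
  let xprev := fun k : nat => if k is k'.+1 then x k' else x 0%N in
  forall k : nat,
    alpha k.+1 ^+ 2 * L / 2 * h (x k) + Vbreg w (z k.+1) xstar
    <= (alpha k.+1 ^+ 2 * L - 2 * alpha k.+1) / 2 * h (xprev k)
       + Vbreg w (z k) xstar.
Proof.
move=> Qspd f_convex df L_gt0 f_Lip f_min dw w_sc alpha_gt0 alpha1 tau_bound z0 y_step
  z_step x_step h xprev k.
have a_gt0 : 0 < alpha k.+1 := alpha_gt0 k.+1 isT.
have momentum : alpha k.+1 * ip (grad f (x k)) (x k - z k)
    <= (alpha k.+1 ^+ 2 * L - 2 * alpha k.+1) / 2 * (f (xprev k) - f (x k)
       - (2 * L)^-1 * (qf (invmx Q) (grad f (xprev k)) + qf (invmx Q) (grad f (x k)))).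
  case: k a_gt0 => [|k] a_gt0 /=.
    have coef0 : ((2 / L) ^+ 2 * L - 2 * (2 / L)) / 2 = 0 by field; exact: lt0r_neq0.
    by rewrite z0 subrr ip0r mulr0 alpha1 coef0 mul0r.
  exact: (momentum_le Qspd df L_gt0 f_Lip f_convex a_gt0 (tau_bound k.+1) (y_step k) (x_step k)).
have mirror := mirror_step_bound xstar Qspd w_sc (dw (z k.+1)) (z_step k).
have opt := ip_grad_step_le Qspd df L_gt0 f_Lip f_convex xstar (x k).
have {}opt := ler_wpM2l (ltW a_gt0) opt.
rewrite (grad_min_eq0 f_min (df xstar)) mulmx0 scaler0 subr0 qfE mulmx0 ip0r add0r in opt.
have splitE : xstar - z k = (xstar - x k) + (x k - z k) by rewrite addrA subrK.
rewrite splitE (ipDr _ (xstar - x k)) in mirror.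
rewrite /h /= !Qdnorm_sqr //.
set a := alpha k.+1 in momentum mirror opt *.
set G := qf (invmx Q) (grad f (x k)) in momentum mirror opt *.
have coefE : a ^+ 2 / 2 * G = 2 * (a ^+ 2 * L / 2) * ((2 * L)^-1 * G).
  by field; exact: lt0r_neq0.
lra.
Qed.
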